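(* Let $\mathcal{S}$ be a sound and refutationally complete saturation system and $T$ a theory. Then $\mathcal{S}+\mathrm{IND}^R$ refutes $\mathit{CNF}(\mathit{sk}^\exists(T))$ if and only if the theory $\mathrm{SI}^\omega(\mathit{sk}^\exists(T))$ is inconsistent.
   Context: Classical first-order logic with equality; Skolem symbols $\mathfrak{s}_{Qx\varphi}$ (one new function symbol of arity $|\mathrm{FV}(Qx\varphi)|$ for each formula $Qx\varphi$, $Q\in\{\forall,\exists\}$), iterated languages $\mathit{sk}^\omega(L)$, and Skolemization maps $\mathit{sk}^\exists,\mathit{sk}^\forall$ defined by: $\mathit{sk}^Q$ fixes atoms, commutes with $\wedge,\vee$, $\mathit{sk}^Q(\neg A)=\neg\mathit{sk}^{\overline Q}(A)$, $\mathit{sk}^Q(QxA(x,\vec y))=\mathit{sk}^Q(A(\mathfrak{s}_{QxA}(\vec y),\vec y))$ with $\vec y$ exactly the free variables of $QxA$, $\mathit{sk}^Q(\overline QxA)=\overline Qx\,\mathit{sk}^Q(A)$ ($\overline\forall=\exists$, $\overline\exists=\forall$), applied elementwise to theories. Induction: $I_x\varphi=\forall\vec z(\varphi(0,\vec z)\wedge\forall x(\varphi(x,\vec z)\to\varphi(s(x),\vec z))\to\forall x\varphi(x,\vec z))$; $\mathrm{IND}(\Gamma)=\{I_x\gamma:\gamma\in\Gamma\}$. The Skolem induction operator: $\mathrm{SI}(T)=T+\mathit{sk}^\exists(\mathrm{IND}(\mathcal{F}(L(T))))$, where $\mathcal{F}(L(T))$ is the set of all $L(T)$ formulas; $\mathrm{SI}^i$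 is its $i$-fold iteration and $\mathrm{SI}^\omega(T)=\bigcup_i\mathrm{SI}^i(T)$. Saturation systems: sets of rules $\mathcal{C}/\mathcal{D}$ ($\mathcal{C}$ clause set, $\mathcal{D}$ finite clause set); deductions $\mathcal{D}_0,\dots,\mathcal{D}_n$ with $\mathcal{D}_{i+1}=\mathcal{D}_i\cup\mathcal{B}_i$ for a rule $\mathcal{D}_i/\mathcal{B}_i$; refutation if the empty clause is in $\mathcal{D}_n$. Sound: derivable clauses $C$ from $\mathcal{C}_0$ satisfy $L(C)\subseteq L(\mathcal{C}_0)$ and $\mathcal{C}_0\models C$; refutationally complete: every inconsistent clause set has a refutation. $\mathit{CNF}$ maps universal sentences (and sets thereof) to clause sets. $\mathrm{IND}^R$ is the set of rules $\mathcal{C}/\mathit{CNF}(\mathit{sk}^\exists(I_x\varphi))$ for every clause set $\mathcal{C}$ and every formula $\varphi(x,\vec z)$ over the symbols of $\mathcal{C}$. *)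

From Stdlib Require Import List Arith.
Import ListNotations.
Set Implicit Arguments.

Record sig := { Fs : Type; Ps : Type; zero_sym : Fs; succ_sym : Fs }.

(* Terms, function symbols and formulas (mutually, since a Skolem symbol
   is indexed by a formula  Q x phi, stored as the whole formula). *)
Inductive term (S : sig) : Type :=
| var : nat -> term S
| app : fsym S -> list (term S) -> term S
with fsym (S : sig) : Type :=
| base : Fs S -> fsym S
| skf : form S -> fsym S
with form (S : sig) : Type :=
| atom : Ps S -> list (term S) -> form S
| eqf : term S -> term S -> form S
| neg : form S -> form S
| conj : form S -> form S -> form S
| disj : form S -> form S -> form S
| all : form S -> form S
| ex : form S -> form S.

Arguments var {S} n.
Arguments app {S} f ts.
Arguments base {S} f.
Arguments skf {S} A.
Arguments atom {S} p ts.
Arguments eqf {S} t u.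
Arguments neg {S} A.
Arguments conj {S} A B.
Arguments disj {S} A B.
Arguments all {S} A.
Arguments ex {S} A.

Definition imp {S : sig} (A B : form S) : form S := disj (neg A) B.

Definition up_ren (r : nat -> nat) (n : nat) : nat :=
  match n with 0 => 0 | Datatypes.S m => Datatypes.S (r m) end.

Fixpoint rename_t {S : sig} (r : nat -> nat) (t : term S) : term S :=
  match t with
  | var n => var (r n)
  | app f ts => app f (map (rename_t r) ts)
  end.

Definition scons {A : Type} (a : A) (s : nat -> A) (n : nat) : A :=
  match n with 0 => a | Datatypes.S m => s m end.

Definition up_sub {S : sig} (s : nat -> term S) : nat -> term S :=
  scons (var 0) (fun m => rename_t Datatypes.S (s m)).

Fixpoint subst_t {S : sig} (s : nat -> term S) (t : term S) : term S :=
  match t with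
  | var n => s n
  | app f ts => app f (map (subst_t s) ts)
  end.

Fixpoint subst_f {S : sig} (s : nat -> term S) (A : form S) : form S :=
  match A with
  | atom p ts => atom p (map (subst_t s) ts)
  | eqf t u => eqf (subst_t s t) (subst_t s u)
  | neg A => neg (subst_f s A)
  | conj A B => conj (subst_f s A) (subst_f s B)
  | disj A B => disj (subst_f s A) (subst_f s B)
  | all A => all (subst_f (up_sub s) A)
  | ex A => ex (subst_f (up_sub s) A)
  end.

Fixpoint free_in_t {S : sig} (n : nat) (t : term S) : bool :=
  match t with
  | var m => Nat.eqb n m
  | app _ ts => existsb (free_in_t n) ts
  end.

Fixpoint free_in_f {S : sig} (n : nat) (A : form S) : bool :=
  match A with
  | atom _ ts => existsb (free_in_t n) ts
  | eqf t u => free_in_t n t || free_in_t n u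
  | neg A => free_in_f n A
  | conj A B | disj A B => free_in_f n A || free_in_f n B
  | all A | ex A => free_in_f (Datatypes.S n) A
  end.

Fixpoint bound_t {S : sig} (t : term S) : nat :=
  match t with
  | var m => Datatypes.S m
  | app _ ts => fold_right Nat.max 0 (map bound_t ts)
  end.

Fixpoint bound_f {S : sig} (A : form S) : nat :=
  match A with
  | atom _ ts => fold_right Nat.max 0 (map bound_t ts)
  | eqf t u => Nat.max (bound_t t) (bound_t u)
  | neg A => bound_f A
  | conj A B | disj A B => Nat.max (bound_f A) (bound_f B)
  | all A | ex A => Nat.pred (bound_f A)
  end.

Definition fv {S : sig} (A : form S) : list nat :=
  filter (fun n => free_in_f n A) (seq 0 (bound_f A)).

Definition sentence {S : sig} (A : form S) : Prop := bound_f A = 0.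

Definition skterm {S : sig} (QA : form S) : term S :=
  app (skf QA) (map var (fv QA)).

(* ---------- Skolemization  sk^Q.
   q = true  : sk^exists ;  q = false : sk^forall.
   sk q s A  computes  sk^Q (A[s])  (pending substitution s), which makes
   the recursion structural:
     sk^Q(QxA(x,y))  = sk^Q(A(s_{QxA}(y), y))
     sk^Q(Q'xA)      = Q'x sk^Q(A)   (Q' the dual quantifier)
     sk^Q(~A)        = ~ sk^{dual Q}(A)
   The Skolem symbol is indexed by the actual formula (QxA)[s]. *)
Fixpoint sk {S : sig} (q : bool) (s : nat -> term S) (A : form S) : form S :=
  match A with
  | atom p ts => atom p (map (subst_t s) ts)
  | eqf t u => eqf (subst_t s t) (subst_t s u)
  | neg A => neg (sk (negb q) s A)
  | conj A B => conj (sk q s A) (sk q s B)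
  | disj A B => disj (sk q s A) (sk q s B)
  | all A =>
      if q then all (sk q (up_sub s) A)
      else sk q (scons (skterm (subst_f s (all A))) s) A
  | ex A =>
      if q then sk q (scons (skterm (subst_f s (ex A))) s) A
      else ex (sk q (up_sub s) A)
  end.

Definition skE {S : sig} (A : form S) : form S := sk true var A.
Definition skA {S : sig} (A : form S) : form S := sk false var A.

Definition theory (S : sig) := form S -> Prop.

Definition skE_th {S : sig} (T : theory S) : theory S :=
  fun A => exists B, T B /\ A = skE B.

Record structure (S : sig) := {
  dom : Type;
  dom_inh : dom;
  ifun : fsym S -> list dom -> dom;
  ipred : Ps S -> list dom -> Prop }.

Fixpoint eval {S : sig} (M : structure S) (r : nat -> dom M) (t : term S)
  : dom M :=
  match t with
  | var n => r n
  | app f ts => ifun M f (map (eval M r) ts)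
  end.

Fixpoint sat {S : sig} (M : structure S) (r : nat -> dom M) (A : form S)
  : Prop :=
  match A with
  | atom p ts => ipred M p (map (eval M r) ts)
  | eqf t u => eval M r t = eval M r u
  | neg A => ~ sat M r A
  | conj A B => sat M r A /\ sat M r B
  | disj A B => sat M r A \/ sat M r B
  | all A => forall d, sat M (scons d r) A
  | ex A => exists d, sat M (scons d r) A
  end.

Definition model {S : sig} (M : structure S) (T : theory S) : Prop :=
  forall A, T A -> forall r, sat M r A.

Definition inconsistent {S : sig} (T : theory S) : Prop :=
  forall M : structure S, ~ model M T.

Inductive symbol (S : sig) := SF (f : fsym S) | SP (p : Ps S).
Arguments SF {S} f.
Arguments SP {S} p.

Fixpoint syms_t {S : sig} (t : term S) : list (symbol S) :=
  match t with
  | var _ => []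
  | app f ts => SF f :: flat_map syms_t ts
  end.

Fixpoint syms_f {S : sig} (A : form S) : list (symbol S) :=
  match A with
  | atom p ts => SP p :: flat_map syms_t ts
  | eqf t u => syms_t t ++ syms_t u
  | neg A => syms_f A
  | conj A B | disj A B => syms_f A ++ syms_f B
  | all A | ex A => syms_f A
  end.

Definition language (S : sig) := symbol S -> Prop.

Definition lang_th {S : sig} (T : theory S) : language S :=
  fun s => exists A, T A /\ In s (syms_f A).

Definition over {S : sig} (L : language S) (A : form S) : Prop :=
  forall s, In s (syms_f A) -> L s.

Definition zero_t {S : sig} : term S := app (base (zero_sym S)) [].
Definition succ_t {S : sig} (t : term S) : term S := app (base (succ_sym S)) [t].

(* I_x phi, with x the de Bruijn index 0 of phi and z its other free
   variables (universally closed):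
   forall z (phi(0,z) /\ forall x (phi(x,z) -> phi(s x,z)) -> forall x phi(x,z)) *)
Definition ind_body {S : sig} (phi : form S) : form S :=
  imp (conj (subst_f (scons zero_t var) phi)
            (all (imp phi (subst_f (scons (succ_t (var 0))
                                          (fun n => var (Datatypes.S n))) phi))))
      (all phi).

Definition ind {S : sig} (phi : form S) : form S :=
  Nat.iter (bound_f (ind_body phi)) (@all S) (ind_body phi).

Definition SI {S : sig} (T : theory S) : theory S :=
  fun A => T A \/ exists phi, over (lang_th T) phi /\ A = skE (ind phi).

Definition SIn {S : sig} (n : nat) (T : theory S) : theory S := Nat.iter n SI T.

Definition SIw {S : sig} (T : theory S) : theory S :=
  fun A => exists n, SIn n T A.

Inductive atomic (S : sig) :=
| APred : Ps S -> list (term S) -> atomic S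
| AEq : term S -> term S -> atomic S.
Arguments APred {S} p ts.
Arguments AEq {S} t u.

Definition literal (S : sig) := (bool * atomic S)%type.  (* true = positive *)
Definition clause (S : sig) := list (literal S).
Definition clause_set (S : sig) := clause S -> Prop.

Definition sat_atomic {S : sig} (M : structure S) (r : nat -> dom M)
  (a : atomic S) : Prop :=
  match a with
  | APred p ts => ipred M p (map (eval M r) ts)
  | AEq t u => eval M r t = eval M r u
  end.

Definition sat_lit {S : sig} (M : structure S) (r : nat -> dom M)
  (l : literal S) : Prop :=
  if fst l then sat_atomic M r (snd l) else ~ sat_atomic M r (snd l).

Definition sat_clause {S : sig} (M : structure S) (C : clause S) : Prop :=
  forall r, exists l, In l C /\ sat_lit M r l.

Definition cs_model {S : sig} (M : structure S) (D : clause_set S) : Prop :=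
  forall C, D C -> sat_clause M C.

Definition cs_unsat {S : sig} (D : clause_set S) : Prop :=
  forall M : structure S, ~ cs_model M D.

Definition entails {S : sig} (D : clause_set S) (C : clause S) : Prop :=
  forall M : structure S, cs_model M D -> sat_clause M C.

Definition syms_atomic {S : sig} (a : atomic S) : list (symbol S) :=
  match a with
  | APred p ts => SP p :: flat_map syms_t ts
  | AEq t u => syms_t t ++ syms_t u
  end.

Definition syms_clause {S : sig} (C : clause S) : list (symbol S) :=
  flat_map (fun l => syms_atomic (snd l)) C.

Definition lang_cs {S : sig} (D : clause_set S) : language S :=
  fun s => exists C, D C /\ In s (syms_clause C).

(* ---------- CNF of universal sentences.
   pol = polarity; env maps de Bruijn indices to clause variables;
   next = first fresh clause variable.  Every (effectively universal)
   quantifier gets a fresh clause variable; conjunction = union of clause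
   sets, disjunction = pairwise union of clauses (variables are disjoint).
   Only meant for universal sentences (all quantifiers effectively
   universal), which is the case for the outputs of sk^exists. *)
Definition cross {S : sig} (X Y : list (clause S)) : list (clause S) :=
  flat_map (fun c => map (fun d => c ++ d) Y) X.

Fixpoint cnf_aux {S : sig} (pol : bool) (env : list nat) (next : nat)
  (A : form S) : list (clause S) * nat :=
  match A with
  | atom p ts =>
      ([[(pol, APred p (map (rename_t (fun n => nth n env 0)) ts))]], next)
  | eqf t u =>
      ([[(pol, AEq (rename_t (fun n => nth n env 0) t)
                   (rename_t (fun n => nth n env 0) u))]], next)
  | neg A => cnf_aux (negb pol) env next A
  | conj A B =>
      let (X, n1) := cnf_aux pol env next A in
      let (Y, n2) := cnf_aux pol env n1 B in
      ((if pol then X ++ Y else cross X Y), n2)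
  | disj A B =>
      let (X, n1) := cnf_aux pol env next A in
      let (Y, n2) := cnf_aux pol env n1 B in
      ((if pol then cross X Y else X ++ Y), n2)
  | all A | ex A => cnf_aux pol (next :: env) (Datatypes.S next) A
  end.

Definition cnf {S : sig} (A : form S) : list (clause S) :=
  fst (cnf_aux true [] 0 A).

Definition cnf_th {S : sig} (T : theory S) : clause_set S :=
  fun C => exists A, T A /\ In C (cnf A).

Definition rule_system (S : sig) := clause_set S -> list (clause S) -> Prop.

Definition cs_union {S : sig} (D : clause_set S) (B : list (clause S))
  : clause_set S := fun c => D c \/ In c B.

(* a deduction D_0 = C0, D_{i+1} = D_i u B_i with D_i/B_i a rule;
   it is given by the list B_0, ..., B_{n-1} *)
Fixpoint valid_deduction {S : sig} (rs : rule_system S) (D : clause_set S)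
  (Bs : list (list (clause S))) : Prop :=
  match Bs with
  | [] => True
  | B :: Bs' => rs D B /\ valid_deduction rs (cs_union D B) Bs'
  end.

Fixpoint last_set {S : sig} (D : clause_set S) (Bs : list (list (clause S)))
  : clause_set S :=
  match Bs with
  | [] => D
  | B :: Bs' => last_set (cs_union D B) Bs'
  end.

Definition derivable {S : sig} (rs : rule_system S) (C0 : clause_set S)
  (C : clause S) : Prop :=
  exists Bs, valid_deduction rs C0 Bs /\ last_set C0 Bs C.

Definition refutes {S : sig} (rs : rule_system S) (C0 : clause_set S) : Prop :=
  derivable rs C0 [].

Definition sound {S : sig} (rs : rule_system S) : Prop :=
  forall C0 C, derivable rs C0 C ->
    (forall s, In s (syms_clause C) -> lang_cs C0 s) /\ entails C0 C.

Definition refutationally_complete {S : sig} (rs : rule_system S) : Prop :=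
  forall C0, cs_unsat C0 -> refutes rs C0.

Definition IND_R {S : sig} : rule_system S :=
  fun D B => exists phi, over (lang_cs D) phi /\ B = cnf (skE (ind phi)).

Definition sys_union {S : sig} (r1 r2 : rule_system S) : rule_system S :=
  fun D B => r1 D B \/ r2 D B.

(* If S + IND^R derives the empty clause, every model of SI^ω(sk^∃(T)) would
   satisfy it: clauses produced by S are entailed by the current clause set and
   use only its symbols, so at every stage the clause set lies in the language
   of some SI^k(sk^∃(T)), and a clause produced by IND^R then belongs to the CNF
   of an axiom of SI^(k+1)(sk^∃(T)).

   Conversely, SI^ω(sk^∃(T)) consists of universal sentences, so by compactness
   (through an ultraproduct, for which the universal half of Łoś's theorem
   suffices) a finite part of it is unsatisfiable.  By induction on k, the CNF
   of every axiom of SI^k(sk^∃(T)) is reachable by finitely many IND^R steps,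
   since each symbol of the induction formula already occurs in a clause
   derived earlier.  The CNF of the finite part is then an unsatisfiable clause
   set, which S refutes by refutational completeness. *)

From Stdlib Require Import List Arith Lia Classical ClassicalEpsilon
  FunctionalExtensionality PropExtensionality ProofIrrelevance.
From mathcomp Require filter.
Import ListNotations.
Set Implicit Arguments.

(** * Free variables and satisfaction *)

Definition agree {D : Type} (n : nat) (r r' : nat -> D) : Prop :=
  forall i, i < n -> r i = r' i.

Lemma agree_le {D : Type} m n (r r' : nat -> D) : m <= n -> agree n r r' -> agree m r r'.
Proof. intros Hmn E i Hi. apply E. lia. Qed.

Lemma agree_scons {D : Type} (d : D) n r r' :
  agree (Nat.pred n) r r' -> agree n (scons d r) (scons d r').
Proof. intros E [|i] Hi; simpl; auto. apply E; lia. Qed.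

Section Syntax.
Variable Sg : sig.
Implicit Types (t : term Sg) (ts : list (term Sg)) (A QA phi : form Sg)
  (s : nat -> term Sg).

Fixpoint term_nested_ind (P : term Sg -> Prop) (Hvar : forall n, P (var n))
  (Happ : forall f ts, Forall P ts -> P (app f ts)) (t : term Sg) : P t :=
  match t with
  | var n => Hvar n
  | app f ts =>
      Happ f ts ((fix go (l : list (term Sg)) : Forall P l :=
                    match l with
                    | [] => Forall_nil _
                    | u :: l => Forall_cons _ (term_nested_ind Hvar Happ u) (go l)
                    end) ts)
  end.

Lemma bound_t_In {ts t} :
  In t ts -> bound_t t <= fold_right Nat.max 0 (map bound_t ts).
Proof.
  induction ts as [|u ts IH]; simpl; [tauto|].
  intros [->|H]; [|specialize (IH H)]; lia.
Qed.

Lemma max_bound_t_le ts m :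
  (forall t, In t ts -> bound_t t <= m) -> fold_right Nat.max 0 (map bound_t ts) <= m.
Proof.
  induction ts as [|u ts IH]; simpl; intros H; [lia|].
  pose proof (H u (or_introl eq_refl)). pose proof (IH (fun t Ht => H t (or_intror Ht))).
  lia.
Qed.

Lemma syms_rename f t : syms_t (rename_t f t) = syms_t t.
Proof.
  induction t as [n|g ts IH] using term_nested_ind; simpl; auto.
  f_equal. induction IH; simpl; congruence.
Qed.

Lemma bound_subst_t s t m :
  (forall i, i < bound_t t -> bound_t (s i) <= m) -> bound_t (subst_t s t) <= m.
Proof.
  induction t as [n|g ts IH] using term_nested_ind; simpl; intros E.
  - apply E. lia.
  - apply max_bound_t_le. intros t Ht. apply in_map_iff in Ht.
    destruct Ht as [u [<- Hu]]. rewrite Forall_forall in IH.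
    apply IH; auto. intros i Hi. apply E. pose proof (bound_t_In Hu). lia.
Qed.

Lemma bound_rename f t m :
  (forall i, i < bound_t t -> f i < m) -> bound_t (rename_t f t) <= m.
Proof.
  induction t as [n|g ts IH] using term_nested_ind; simpl; intros E.
  - apply E. lia.
  - apply max_bound_t_le. intros t Ht. apply in_map_iff in Ht.
    destruct Ht as [u [<- Hu]]. rewrite Forall_forall in IH.
    apply IH; auto. intros i Hi. apply E. pose proof (bound_t_In Hu). lia.
Qed.

Lemma bound_up_sub s n m :
  (forall i, i < Nat.pred n -> bound_t (s i) <= m) ->
  forall i, i < n -> bound_t (up_sub s i) <= S m.
Proof.
  intros E [|i] Hi; simpl; [lia|]. apply bound_rename.
  specialize (E i ltac:(lia)). lia.
Qed.

Lemma bound_subst_f A : forall s m,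
  (forall i, i < bound_f A -> bound_t (s i) <= m) -> bound_f (subst_f s A) <= m.
Proof.
  induction A; simpl; intros s m E.
  - apply max_bound_t_le. intros t Ht. apply in_map_iff in Ht.
    destruct Ht as [u [<- Hu]]. apply bound_subst_t.
    intros i Hi. apply E. pose proof (bound_t_In Hu). lia.
  - enough (bound_t (subst_t s t) <= m /\ bound_t (subst_t s t0) <= m) by lia.
    split; apply bound_subst_t; intros; apply E; lia.
  - auto.
  - enough (bound_f (subst_f s A1) <= m /\ bound_f (subst_f s A2) <= m) by lia.
    split; [apply IHA1|apply IHA2]; intros; apply E; lia.
  - enough (bound_f (subst_f s A1) <= m /\ bound_f (subst_f s A2) <= m) by lia.
    split; [apply IHA1|apply IHA2]; intros; apply E; lia.
  - enough (bound_f (subst_f (up_sub s) A) <= S m) by lia.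
    apply IHA, bound_up_sub; auto.
  - enough (bound_f (subst_f (up_sub s) A) <= S m) by lia.
    apply IHA, bound_up_sub; auto.
Qed.

Lemma bound_skterm QA : bound_t (skterm QA) <= bound_f QA.
Proof.
  apply max_bound_t_le. intros t Ht. apply in_map_iff in Ht.
  destruct Ht as [i [<- Hi]]. apply filter_In, proj1, in_seq in Hi. simpl. lia.
Qed.

Lemma bound_sk A : forall q s m,
  (forall i, i < bound_f A -> bound_t (s i) <= m) -> bound_f (sk q s A) <= m.
Proof.
  induction A; simpl; intros q s m E.
  - apply max_bound_t_le. intros t Ht. apply in_map_iff in Ht.
    destruct Ht as [u [<- Hu]]. apply bound_subst_t.
    intros i Hi. apply E. pose proof (bound_t_In Hu). lia.
  - enough (bound_t (subst_t s t) <= m /\ bound_t (subst_t s t0) <= m) by lia.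
    split; apply bound_subst_t; intros; apply E; lia.
  - auto.
  - enough (bound_f (sk q s A1) <= m /\ bound_f (sk q s A2) <= m) by lia.
    split; [apply IHA1|apply IHA2]; intros; apply E; lia.
  - enough (bound_f (sk q s A1) <= m /\ bound_f (sk q s A2) <= m) by lia.
    split; [apply IHA1|apply IHA2]; intros; apply E; lia.
  - destruct q; simpl.
    + enough (bound_f (sk true (up_sub s) A) <= S m) by lia.
      apply IHA, bound_up_sub; auto.
    + apply IHA. intros [|i] Hi; simpl; [|apply E; lia].
      etransitivity; [apply bound_skterm|]. apply (bound_subst_f (all A)). auto.
  - destruct q; simpl.
    + apply IHA. intros [|i] Hi; simpl; [|apply E; lia].
      etransitivity; [apply bound_skterm|]. apply (bound_subst_f (ex A)). auto.
    + enough (bound_f (sk false (up_sub s) A) <= S m) by lia.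
      apply IHA, bound_up_sub; auto.
Qed.

Lemma skE_sentence A : sentence A -> sentence (skE A).
Proof.
  unfold sentence, skE. intros H.
  enough (bound_f (sk true var A) <= 0) by lia.
  apply bound_sk. intros i Hi. lia.
Qed.

Lemma bound_iter_all A k : bound_f (Nat.iter k (@all Sg) A) = bound_f A - k.
Proof. induction k; simpl; [lia|]. rewrite IHk. lia. Qed.

Lemma ind_sentence phi : sentence (ind phi).
Proof. unfold sentence, ind. rewrite bound_iter_all. lia. Qed.

Fixpoint universal (pol : bool) A : Prop :=
  match A with
  | atom _ _ | eqf _ _ => True
  | neg A => universal (negb pol) A
  | conj A B | disj A B => universal pol A /\ universal pol B
  | all A => pol = true /\ universal pol A
  | ex A => pol = false /\ universal pol A
  end.

Lemma sk_universal A : forall q s, universal q (sk q s A).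
Proof. induction A; intros [] s; simpl; auto. Qed.

End Syntax.

Section Satisfaction.
Variables (Sg : sig) (M : structure Sg).
Implicit Types (t : term Sg) (A : form Sg).

Definition holds (pol : bool) (r : nat -> dom M) A : Prop :=
  if pol then sat M r A else ~ sat M r A.

Lemma eval_rename r f t : eval M r (rename_t f t) = eval M (fun n => r (f n)) t.
Proof.
  induction t as [n|g ts IH] using term_nested_ind; simpl; auto.
  f_equal. rewrite map_map. induction IH; simpl; congruence.
Qed.

Lemma eval_agree r r' t : agree (bound_t t) r r' -> eval M r t = eval M r' t.
Proof.
  induction t as [n|g ts IH] using term_nested_ind; simpl; intros E.
  - apply E. lia.
  - f_equal. apply map_ext_in. intros u Hu. rewrite Forall_forall in IH.
    apply IH; auto. intros i Hi. apply E. pose proof (bound_t_In Hu). lia.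
Qed.

Lemma sat_agree A : forall r r', agree (bound_f A) r r' -> sat M r A <-> sat M r' A.
Proof.
  induction A; simpl; intros r r' E.
  - replace (map (eval M r') l) with (map (eval M r) l); [tauto|].
    apply map_ext_in. intros u Hu. apply eval_agree.
    intros i Hi. apply E. pose proof (bound_t_In Hu). lia.
  - rewrite (@eval_agree r r' t), (@eval_agree r r' t0); [tauto| |];
      intros i Hi; apply E; lia.
  - rewrite (IHA r r'); tauto.
  - rewrite (IHA1 r r'), (IHA2 r r'); [tauto| |]; intros i Hi; apply E; lia.
  - rewrite (IHA1 r r'), (IHA2 r r'); [tauto| |]; intros i Hi; apply E; lia.
  - split; intros H d; specialize (IHA _ _ (agree_scons d E)); apply IHA, H.
  - split; intros [d H]; exists d; specialize (IHA _ _ (agree_scons d E));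
      apply IHA, H.
Qed.

Lemma sat_ext A r r' : (forall i, r i = r' i) -> sat M r A <-> sat M r' A.
Proof. intros E. apply sat_agree. intros i _. apply E. Qed.

End Satisfaction.

(** * Clausal normal form *)

Ltac destruct_cnf_aux H :=
  simpl in H;
  match type of H with
  | context [cnf_aux ?p ?e ?n ?A] =>
      let X1 := fresh "X1" in let n1 := fresh "n1" in let E1 := fresh "E1" in
      destruct (cnf_aux p e n A) as [X1 n1] eqn:E1;
      match type of H with
      | context [cnf_aux ?p' ?e' ?n' ?B] =>
          let X2 := fresh "X2" in let n2 := fresh "n2" in let E2 := fresh "E2" in
          destruct (cnf_aux p' e' n' B) as [X2 n2] eqn:E2
      end
  end;
  injection H as <- <-.

Section CnfSymbols.
Variable Sg : sig.
Implicit Types (A : form Sg) (X Y : list (clause Sg)) (c d : clause Sg).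

Lemma in_cross X Y c :
  In c (cross X Y) <-> exists c1 c2, In c1 X /\ In c2 Y /\ c = c1 ++ c2.
Proof.
  unfold cross. rewrite in_flat_map. split.
  - intros [c1 [H1 H2]]. apply in_map_iff in H2. destruct H2 as [c2 [<- H2]]. eauto.
  - intros [c1 [c2 [H1 [H2 ->]]]]. exists c1. split; auto. apply in_map_iff. eauto.
Qed.

Lemma cross_nonempty X Y : X <> [] -> Y <> [] -> cross X Y <> [].
Proof. destruct X as [|c X], Y as [|d Y]; simpl; congruence. Qed.

Lemma cnf_aux_next_le A : forall pol env next X n,
  cnf_aux pol env next A = (X, n) -> next <= n.
Proof.
  induction A; intros pol env next X n HC;
    try (injection HC as <- <-; lia); try (simpl in HC; eauto).
  - destruct_cnf_aux HC. apply IHA1 in E1. apply IHA2 in E2. lia.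
  - destruct_cnf_aux HC. apply IHA1 in E1. apply IHA2 in E2. lia.
  - apply IHA in HC. lia.
  - apply IHA in HC. lia.
Qed.

Lemma cnf_aux_nonempty A : forall pol env next X n,
  cnf_aux pol env next A = (X, n) -> X <> [].
Proof.
  induction A; intros pol env next X n HC;
    try (injection HC as <- <-; discriminate); try (simpl in HC; eauto).
  - destruct_cnf_aux HC. apply IHA1 in E1. apply IHA2 in E2.
    destruct pol; [destruct X1; simpl; congruence|]. apply cross_nonempty; auto.
  - destruct_cnf_aux HC. apply IHA1 in E1. apply IHA2 in E2.
    destruct pol; [apply cross_nonempty; auto|]. destruct X1; simpl; congruence.
Qed.

Definition mentions X (s : symbol Sg) : Prop :=
  exists c, In c X /\ In s (syms_clause c).

Lemma syms_clause_app c d : syms_clause (c ++ d) = syms_clause c ++ syms_clause d.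
Proof. apply flat_map_app. Qed.

Lemma mentions_app X Y s : mentions (X ++ Y) s <-> mentions X s \/ mentions Y s.
Proof.
  unfold mentions. split.
  - intros [c [Hc Hs]]. apply in_app_or in Hc as [Hc|Hc]; eauto.
  - intros [[c [Hc Hs]]|[c [Hc Hs]]]; exists c; rewrite in_app_iff; auto.
Qed.

Lemma mentions_cross X Y s :
  X <> [] -> Y <> [] -> mentions (cross X Y) s <-> mentions X s \/ mentions Y s.
Proof.
  intros NX NY. unfold mentions. split.
  - intros [c [Hc Hs]]. apply in_cross in Hc as [c1 [c2 [H1 [H2 ->]]]].
    rewrite syms_clause_app, in_app_iff in Hs. destruct Hs; eauto.
  - destruct X as [|c1 X], Y as [|c2 Y]; try congruence.
    intros [[c [Hc Hs]]|[c [Hc Hs]]].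
    + exists (c ++ c2). rewrite in_cross, syms_clause_app, in_app_iff.
      split; [exists c, c2; simpl|]; auto.
    + exists (c1 ++ c). rewrite in_cross, syms_clause_app, in_app_iff.
      split; [exists c1, c; simpl|]; auto.
Qed.

Lemma flat_map_syms_rename f (ts : list (term Sg)) :
  flat_map syms_t (map (rename_t f) ts) = flat_map syms_t ts.
Proof. induction ts; simpl; auto. rewrite syms_rename, IHts. auto. Qed.

Lemma mentions_single l s :
  mentions [[l]] s <-> In s (syms_atomic (snd l)).
Proof.
  unfold mentions, syms_clause. simpl. split.
  - intros [c [[<-|[]] H]]. simpl in H. rewrite app_nil_r in H. exact H.
  - intros H. exists [l]. simpl. rewrite app_nil_r. auto.
Qed.

Lemma cnf_aux_syms A : forall pol env next X n,
  cnf_aux pol env next A = (X, n) -> forall s, In s (syms_f A) <-> mentions X s.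
Proof.
  induction A; intros pol env next X n HC s; simpl in HC |- *; try solve [eauto].
  - injection HC as <- <-. rewrite mentions_single. simpl.
    rewrite flat_map_syms_rename. reflexivity.
  - injection HC as <- <-. rewrite mentions_single. simpl.
    rewrite !syms_rename. reflexivity.
  - destruct_cnf_aux HC. rewrite in_app_iff, (IHA1 _ _ _ _ _ E1 s), (IHA2 _ _ _ _ _ E2 s).
    destruct pol; [rewrite mentions_app|rewrite mentions_cross]; try tauto;
      eauto using cnf_aux_nonempty.
  - destruct_cnf_aux HC. rewrite in_app_iff, (IHA1 _ _ _ _ _ E1 s), (IHA2 _ _ _ _ _ E2 s).
    destruct pol; [rewrite mentions_cross|rewrite mentions_app]; try tauto;
      eauto using cnf_aux_nonempty.
Qed.

Lemma cnf_syms A s : In s (syms_f A) <-> mentions (cnf A) s.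
Proof.
  unfold cnf. destruct (cnf_aux true [] 0 A) as [X n] eqn:E. exact (cnf_aux_syms _ _ _ _ E s).
Qed.

End CnfSymbols.

Section CnfSemantics.
Variables (Sg : sig) (M : structure Sg).
Implicit Types (A : form Sg) (X Y : list (clause Sg)) (c : clause Sg)
  (rho : nat -> dom M).

Definition clause_holds rho c : Prop := exists l, In l c /\ sat_lit M rho l.

Definition clauses_hold X rho : Prop := forall c, In c X -> clause_holds rho c.

Definition env_below (env : list nat) (next : nat) : Prop := forall j, In j env -> j < next.

Lemma env_below_le env next n : env_below env next -> next <= n -> env_below env n.
Proof. intros H Hle j Hj. specialize (H j Hj). lia. Qed.

Lemma env_below_cons env next : env_below env next -> env_below (next :: env) (S next).
Proof. intros H j [<-|Hj]; [lia|]. specialize (H j Hj). lia. Qed.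

(* A clause variable [j] of the CNF stands for the de Bruijn index [i] with
   [nth i env 0 = j]. *)
Definition venv (env : list nat) rho : nat -> dom M := fun i => rho (nth i env 0).

Lemma clause_holds_app rho c (d : clause Sg) :
  clause_holds rho (c ++ d) <-> clause_holds rho c \/ clause_holds rho d.
Proof.
  unfold clause_holds. split.
  - intros [l [Hl H]]. apply in_app_or in Hl as [Hl|Hl]; eauto.
  - intros [[l [Hl H]]|[l [Hl H]]]; exists l; rewrite in_app_iff; auto.
Qed.

Lemma clauses_hold_app X Y rho :
  clauses_hold (X ++ Y) rho <-> clauses_hold X rho /\ clauses_hold Y rho.
Proof.
  unfold clauses_hold. setoid_rewrite in_app_iff. firstorder.
Qed.

Lemma clauses_hold_cross X Y rho :
  clauses_hold X rho \/ clauses_hold Y rho -> clauses_hold (cross X Y) rho.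
Proof.
  intros H c Hc. apply in_cross in Hc as [c1 [c2 [H1 [H2 ->]]]].
  apply clause_holds_app. destruct H; auto.
Qed.

Lemma holds_neg pol rho A : holds M pol rho (neg A) <-> holds M (negb pol) rho A.
Proof. destruct pol; simpl; split; auto. apply NNPP. Qed.

Lemma venv_cons env rho j i : venv (j :: env) rho i = scons (rho j) (venv env rho) i.
Proof. destruct i; reflexivity. Qed.

Lemma map_eval_rename rho f (ts : list (term Sg)) :
  map (eval M rho) (map (rename_t f) ts) = map (eval M (fun n => rho (f n))) ts.
Proof. rewrite map_map. apply map_ext. intros. apply eval_rename. Qed.

Lemma cnf_aux_sound A : forall pol env next X n,
  universal pol A -> cnf_aux pol env next A = (X, n) ->
  forall rho, holds M pol (venv env rho) A -> clauses_hold X rho.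
Proof.
  induction A; intros pol env next X n HU HC rho Hs; simpl in HU, HC.
  - injection HC as <- <-. intros c [<-|[]]. eexists; split; [left; reflexivity|].
    unfold sat_lit; simpl. rewrite map_eval_rename. exact Hs.
  - injection HC as <- <-. intros c [<-|[]]. eexists; split; [left; reflexivity|].
    unfold sat_lit; simpl. rewrite !eval_rename. exact Hs.
  - apply holds_neg in Hs. eauto.
  - destruct_cnf_aux HC. destruct HU as [HU1 HU2]. destruct pol; simpl in Hs.
    + apply clauses_hold_app. split; [eapply IHA1|eapply IHA2]; eauto; apply Hs.
    + apply clauses_hold_cross. apply not_and_or in Hs.
      destruct Hs; [left; eapply IHA1|right; eapply IHA2]; eauto.
  - destruct_cnf_aux HC. destruct HU as [HU1 HU2]. destruct pol; simpl in Hs.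
    + apply clauses_hold_cross.
      destruct Hs; [left; eapply IHA1|right; eapply IHA2]; eauto.
    + apply clauses_hold_app. apply not_or_and in Hs.
      split; [eapply IHA1|eapply IHA2]; eauto; apply Hs.
  - destruct HU as [-> HU]. eapply IHA; eauto. simpl.
    rewrite (sat_ext M A _ _ (venv_cons env rho next)). apply Hs.
  - destruct HU as [-> HU]. eapply IHA; eauto. simpl.
    rewrite (sat_ext M A _ _ (venv_cons env rho next)).
    intros H. apply Hs. exists (rho next). exact H.
Qed.

Definition forces X next rho : Prop :=
  forall rho', agree next rho' rho -> clauses_hold X rho'.

Definition update rho j d : nat -> dom M := fun i => if Nat.eqb i j then d else rho i.

Lemma agree_venv env next rho rho' :
  env_below env next -> agree next rho rho' ->
  agree (length env) (venv env rho) (venv env rho').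
Proof. intros Henv E i Hi. apply E, Henv, nth_In, Hi. Qed.

Lemma venv_update env next rho d :
  env_below env next ->
  agree (length (next :: env)) (venv (next :: env) (update rho next d))
        (scons d (venv env rho)).
Proof.
  intros Henv [|i] Hi; unfold venv, update; simpl.
  - rewrite Nat.eqb_refl. reflexivity.
  - assert (nth i env 0 < next) by (apply Henv, nth_In; simpl in Hi; lia).
    destruct (Nat.eqb_spec (nth i env 0) next); [lia|reflexivity].
Qed.

Lemma sat_venv_update env next rho d A :
  env_below env next -> bound_f A <= S (length env) ->
  sat M (venv (next :: env) (update rho next d)) A <-> sat M (scons d (venv env rho)) A.
Proof. intros Henv Hb. apply sat_agree, (agree_le Hb), (venv_update rho d Henv). Qed.

Lemma forces_update X next rho d :
  forces X next rho -> forces X (S next) (update rho next d).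
Proof.
  intros H rho' E. apply H. intros i Hi. rewrite E by lia. unfold update.
  destruct (Nat.eqb_spec i next); [lia|reflexivity].
Qed.

Lemma forces_app X1 X2 next n1 rho :
  forces (X1 ++ X2) next rho -> next <= n1 -> forces X1 next rho /\ forces X2 n1 rho.
Proof.
  intros HX Hle. split; intros r E c Hc.
  - apply (HX r E). apply in_or_app; auto.
  - apply (HX r (agree_le Hle E)). apply in_or_app; auto.
Qed.

(* The clause sets of the two operands use disjoint fresh variables, so a
   counterexample to [X1] can be extended to a counterexample to [X2]
   without disturbing the former. *)
Lemma forces_cross X1 X2 next n1 rho (Q1 Q2 : (nat -> dom M) -> Prop) :
  forces (cross X1 X2) next rho -> next <= n1 ->
  (forall c r r', In c X1 -> agree n1 r r' -> clause_holds r c -> clause_holds r' c) ->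
  (forall r, forces X1 next r -> Q1 r) ->
  (forall r, forces X2 n1 r -> Q2 r) ->
  (forall r r', agree next r r' -> Q2 r -> Q2 r') ->
  Q1 rho \/ Q2 rho.
Proof.
  intros Hcross Hle Hloc H1 H2 HQ2. apply NNPP. intros Hn.
  apply not_or_and in Hn as [N1 N2].
  assert (exists rho1 c1, agree next rho1 rho /\ In c1 X1 /\ ~ clause_holds rho1 c1)
    as [rho1 [c1 [E1 [Hc1 F1]]]].
  { apply NNPP. intros W. apply N1, H1. intros r E c Hc.
    apply NNPP. intros F. apply W. eauto. }
  assert (exists rho2 c2, agree n1 rho2 rho1 /\ In c2 X2 /\ ~ clause_holds rho2 c2)
    as [rho2 [c2 [E2 [Hc2 F2]]]].
  { apply NNPP. intros W. apply N2, (HQ2 rho1); [exact E1|]. apply H2.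
    intros r E c Hc. apply NNPP. intros F. apply W. eauto. }
  assert (E : agree next rho2 rho).
  { intros i Hi. rewrite E2 by lia. apply E1, Hi. }
  assert (Hc : In (c1 ++ c2) (cross X1 X2)) by (apply in_cross; eauto 6).
  apply (Hcross rho2 E), clause_holds_app in Hc as [Hc|Hc]; [|contradiction].
  apply F1. apply (Hloc c1 rho2 rho1 Hc1); [exact E2|exact Hc].
Qed.

Lemma eval_venv_agree env next rho rho' t :
  env_below env next -> bound_t t <= length env -> agree next rho rho' ->
  eval M rho (rename_t (fun n => nth n env 0) t)
  = eval M rho' (rename_t (fun n => nth n env 0) t).
Proof.
  intros Henv Hb E. rewrite !eval_rename. apply eval_agree.
  exact (agree_le Hb (agree_venv Henv E)).
Qed.

Lemma cnf_aux_local A : forall pol env next X n,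
  cnf_aux pol env next A = (X, n) ->
  env_below env next -> bound_f A <= length env ->
  forall c rho rho', In c X -> agree n rho rho' -> clause_holds rho c -> clause_holds rho' c.
Proof.
  induction A; intros pol env next X n HC Henv Hb c rho rho' Hc E; simpl in HC, Hb.
  - injection HC as <- <-. destruct Hc as [<-|[]].
    intros [lit [[<-|[]] Hl]]. eexists. split; [left; reflexivity|].
    unfold sat_lit in *; simpl in *.
    replace (map (eval M rho') _)
      with (map (eval M rho) (map (rename_t (fun n => nth n env 0)) l)); [exact Hl|].
    rewrite !map_map. apply map_ext_in. intros t Ht. apply (eval_venv_agree t Henv); auto.
    pose proof (bound_t_In Ht). lia.
  - injection HC as <- <-. destruct Hc as [<-|[]].
    intros [lit [[<-|[]] Hl]]. eexists. split; [left; reflexivity|].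
    unfold sat_lit in *; simpl in *.
    rewrite <- (eval_venv_agree t Henv ltac:(lia) E),
            <- (eval_venv_agree t0 Henv ltac:(lia) E).
    exact Hl.
  - eauto.
  - destruct_cnf_aux HC.
    pose proof (cnf_aux_next_le _ _ _ _ E1) as Hle1. pose proof (cnf_aux_next_le _ _ _ _ E2).
    assert (Henv1 := env_below_le Henv Hle1).
    assert (E' : agree n1 rho rho') by (apply (agree_le (n := n2)); auto).
    destruct pol.
    + apply in_app_or in Hc as [Hc|Hc]; [eapply IHA1|eapply IHA2]; eauto; lia.
    + apply in_cross in Hc as [c1 [c2 [H1 [H2 ->]]]].
      rewrite !clause_holds_app. intros [Hc|Hc]; [left; eapply IHA1|right; eapply IHA2];
        eauto; lia.
  - destruct_cnf_aux HC.
    pose proof (cnf_aux_next_le _ _ _ _ E1) as Hle1. pose proof (cnf_aux_next_le _ _ _ _ E2).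
    assert (Henv1 := env_below_le Henv Hle1).
    assert (E' : agree n1 rho rho') by (apply (agree_le (n := n2)); auto).
    destruct pol.
    + apply in_cross in Hc as [c1 [c2 [H1 [H2 ->]]]].
      rewrite !clause_holds_app. intros [Hc|Hc]; [left; eapply IHA1|right; eapply IHA2];
        eauto; lia.
    + apply in_app_or in Hc as [Hc|Hc]; [eapply IHA1|eapply IHA2]; eauto; lia.
  - eapply IHA; eauto using env_below_cons. simpl. lia.
  - eapply IHA; eauto using env_below_cons. simpl. lia.
Qed.

Lemma holds_venv_agree pol env next A rho rho' :
  env_below env next -> bound_f A <= length env ->
  agree next rho rho' -> holds M pol (venv env rho) A -> holds M pol (venv env rho') A.
Proof.
  intros Henv Hb E. assert (Ev := agree_le Hb (agree_venv Henv E)).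
  destruct pol; simpl; rewrite (sat_agree M A Ev); auto.
Qed.

Lemma forces_cross_holds pol env next A1 A2 X1 X2 n1 rho :
  cnf_aux pol env next A1 = (X1, n1) -> env_below env next ->
  bound_f A1 <= length env -> bound_f A2 <= length env ->
  (forall r, forces X1 next r -> holds M pol (venv env r) A1) ->
  (forall r, forces X2 n1 r -> holds M pol (venv env r) A2) ->
  forces (cross X1 X2) next rho ->
  holds M pol (venv env rho) A1 \/ holds M pol (venv env rho) A2.
Proof.
  intros E1 Henv Hb1 Hb2 H1 H2 HX.
  apply (forces_cross (fun r => holds M pol (venv env r) A1)
                      (fun r => holds M pol (venv env r) A2) HX (cnf_aux_next_le _ _ _ _ E1));
    auto.
  - intros c r r' Hc. apply (cnf_aux_local _ _ E1); auto.
  - intros r r' E. eapply holds_venv_agree; [exact Henv|exact Hb2|exact E].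
Qed.

Lemma cnf_aux_complete A : forall pol env next X n,
  universal pol A -> cnf_aux pol env next A = (X, n) ->
  env_below env next -> bound_f A <= length env ->
  forall rho, forces X next rho -> holds M pol (venv env rho) A.
Proof.
  induction A; intros pol env next X n HU HC Henv Hb rho HX; simpl in HU, HC, Hb.
  - injection HC as <- <-.
    destruct (HX rho (fun _ _ => eq_refl) _ (or_introl eq_refl)) as [lit [[<-|[]] Hl]].
    unfold sat_lit in Hl; simpl in Hl. rewrite map_eval_rename in Hl. exact Hl.
  - injection HC as <- <-.
    destruct (HX rho (fun _ _ => eq_refl) _ (or_introl eq_refl)) as [lit [[<-|[]] Hl]].
    unfold sat_lit in Hl; simpl in Hl. rewrite !eval_rename in Hl. exact Hl.
  - apply holds_neg. eauto.
  - destruct_cnf_aux HC. destruct HU as [HU1 HU2].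
    pose proof (cnf_aux_next_le _ _ _ _ E1) as Hle1.
    assert (Henv1 := env_below_le Henv Hle1).
    destruct pol; simpl.
    + destruct (forces_app X1 X2 HX Hle1) as [HX1 HX2].
      split; [apply (IHA1 true env next X1 n1)|apply (IHA2 true env n1 X2 n2)]; auto; lia.
    + apply or_not_and.
      change (holds M false (venv env rho) A1 \/ holds M false (venv env rho) A2).
      eapply forces_cross_holds; [exact E1|exact Henv|lia|lia| | |exact HX]; intros r.
      * apply (IHA1 false env next X1 n1); auto. lia.
      * apply (IHA2 false env n1 X2 n2); auto. lia.
  - destruct_cnf_aux HC. destruct HU as [HU1 HU2].
    pose proof (cnf_aux_next_le _ _ _ _ E1) as Hle1.
    assert (Henv1 := env_below_le Henv Hle1).
    destruct pol; simpl.
    + change (holds M true (venv env rho) A1 \/ holds M true (venv env rho) A2).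
      eapply forces_cross_holds; [exact E1|exact Henv|lia|lia| | |exact HX]; intros r.
      * apply (IHA1 true env next X1 n1); auto. lia.
      * apply (IHA2 true env n1 X2 n2); auto. lia.
    + destruct (forces_app X1 X2 HX Hle1) as [HX1 HX2]. apply and_not_or.
      split; [apply (IHA1 false env next X1 n1)|apply (IHA2 false env n1 X2 n2)]; auto; lia.
  - destruct HU as [-> HU]. simpl. intros d.
    apply (sat_venv_update rho d A Henv ltac:(lia)).
    apply (IHA _ _ _ _ _ HU HC (env_below_cons Henv) ltac:(simpl; lia)), forces_update, HX.
  - destruct HU as [-> HU]. simpl. intros [d Hd].
    apply (IHA _ _ _ _ _ HU HC (env_below_cons Henv) ltac:(simpl; lia) _
             (forces_update (d := d) HX)).
    apply (sat_venv_update rho d A Henv ltac:(lia)), Hd.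
Qed.

Lemma cnf_model A : universal true A -> sentence A ->
  (forall r, sat M r A) <-> (forall c, In c (cnf A) -> sat_clause M c).
Proof.
  intros HU HA. unfold cnf. destruct (cnf_aux true [] 0 A) as [X n] eqn:E. simpl.
  assert (Hr : forall r r', sat M r A -> sat M r' A)
    by (intros r r'; apply sat_agree; rewrite HA; intros i Hi; lia).
  split.
  - intros H c Hc rho. eapply cnf_aux_sound; eauto. apply H.
  - intros H r. apply (Hr (venv [] r)).
    apply (cnf_aux_complete A true HU E); [intros j []|unfold sentence in HA; simpl; lia|].
    intros r' _ c Hc. apply H, Hc.
Qed.

Lemma cnf_th_model (T : theory Sg) :
  (forall A, T A -> universal true A /\ sentence A) -> model M T <-> cs_model M (cnf_th T).
Proof.
  intros HT. split.
  - intros H c [A [HA Hc]].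
    apply (proj1 (cnf_model (proj1 (HT A HA)) (proj2 (HT A HA)))); auto.
  - intros H A HA. apply (cnf_model (proj1 (HT A HA)) (proj2 (HT A HA))).
    intros c Hc. apply H. exists A. auto.
Qed.

End CnfSemantics.

(** * Ultraproducts and compactness *)

Section Ultraproduct.
Variables (Sg : sig) (I : Type) (M : I -> structure Sg) (U : (I -> Prop) -> Prop).
Hypothesis U_ultra : filter.UltraFilter U.

Lemma U_mono (X Y : I -> Prop) : U X -> (forall i, X i -> Y i) -> U Y.
Proof. intros HX H. exact (filter.filterS H HX). Qed.

Lemma U_and (X Y : I -> Prop) : U X -> U Y -> U (fun i => X i /\ Y i).
Proof. apply filter.filterI. Qed.

Lemma U_all (X : I -> Prop) : (forall i, X i) -> U X.
Proof. intros H. exact (U_mono X (filter.filterT (F := U)) (fun i _ => H i)). Qed.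

Lemma U_ex (X : I -> Prop) : U X -> exists i, X i.
Proof. apply filter.filter_ex. Qed.

Lemma U_or (X Y : I -> Prop) : U (fun i => X i \/ Y i) -> U X \/ U Y.
Proof.
  intros H. destruct (filter.in_ultra_setVsetC X U_ultra) as [HX|HnX]; auto. right.
  apply (U_mono _ (U_and H HnX)). intros i [[Hx|Hy] Hn]; [contradiction|exact Hy].
Qed.

Lemma U_contra (X : I -> Prop) : U X -> (forall i, ~ X i) -> False.
Proof. intros HX H. destruct (U_ex HX) as [i Hi]. exact (H i Hi). Qed.

Definition product : Type := forall i, dom (M i).

Definition ae_eq (f g : product) : Prop := U (fun i => f i = g i).

Lemma ae_eq_refl f : ae_eq f f.
Proof. apply U_all. reflexivity. Qed.

Lemma ae_eq_sym f g : ae_eq f g -> ae_eq g f.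
Proof. intros H. apply (U_mono _ H). auto. Qed.

Lemma ae_eq_trans f g h : ae_eq f g -> ae_eq g h -> ae_eq f h.
Proof. intros H1 H2. apply (U_mono _ (U_and H1 H2)). intros i [-> ->]. reflexivity. Qed.

Definition canon (f : product) : product :=
  epsilon (inhabits (fun i => dom_inh (M i))) (fun g => ae_eq g f).

Lemma canon_ae_eq f : ae_eq (canon f) f.
Proof. apply (epsilon_spec _ (fun g => ae_eq g f)). exists f. apply ae_eq_refl. Qed.

Lemma canon_resp f g : ae_eq f g -> canon f = canon g.
Proof.
  intros H. unfold canon. f_equal. apply functional_extensionality. intros h.
  apply propositional_extensionality. split; intros; eauto using ae_eq_trans, ae_eq_sym.
Qed.

(* Elements of the ultraproduct are the canonical representatives of the
   classes of [U]-almost equality. *)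
Definition ultra_dom : Type := {f : product | canon f = f}.

Definition class_of (f : product) : ultra_dom :=
  exist _ (canon f) (canon_resp (canon_ae_eq f)).

Lemma ultra_dom_eq (x y : ultra_dom) : ae_eq (proj1_sig x) (proj1_sig y) -> x = y.
Proof.
  destruct x as [f Hf], y as [g Hg]. simpl. intros H.
  assert (f = g) as <- by (rewrite <- Hf, <- Hg; apply canon_resp, H).
  f_equal. apply proof_irrelevance.
Qed.

Definition proj_list (ds : list ultra_dom) (i : I) : list (dom (M i)) :=
  map (fun d => proj1_sig d i) ds.

Definition ultraproduct : structure Sg :=
  {| dom := ultra_dom;
     dom_inh := class_of (fun i => dom_inh (M i));
     ifun := fun f ds => class_of (fun i => ifun (M i) f (proj_list ds i));
     ipred := fun p ds => U (fun i => ipred (M i) p (proj_list ds i)) |}.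

Definition proj_env (r : nat -> ultra_dom) (i : I) : nat -> dom (M i) :=
  fun n => proj1_sig (r n) i.

Lemma proj_list_eval r ts :
  Forall (fun t => U (fun i => proj1_sig (eval ultraproduct r t) i
                               = eval (M i) (proj_env r i) t)) ts ->
  U (fun i => proj_list (map (eval ultraproduct r) ts) i = map (eval (M i) (proj_env r i)) ts).
Proof.
  induction 1 as [|t ts Ht _ IHts]; simpl.
  - apply U_all. reflexivity.
  - apply (U_mono _ (U_and Ht IHts)). intros i [E1 E2].
    unfold proj_list in *. simpl. f_equal; [exact E1|exact E2].
Qed.

Lemma eval_ultraproduct r t :
  U (fun i => proj1_sig (eval ultraproduct r t) i = eval (M i) (proj_env r i) t).
Proof.
  induction t as [n|g ts IH] using term_nested_ind; simpl.
  - apply U_all. reflexivity.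
  - set (f := fun i => ifun (M i) g (proj_list (map (eval ultraproduct r) ts) i)).
    apply (U_mono _ (U_and (canon_ae_eq f) (proj_list_eval r IH))). intros i [E1 E2].
    etransitivity; [exact E1|]. unfold f. f_equal. exact E2.
Qed.

Lemma proj_env_scons (d : ultra_dom) r i n :
  proj_env (scons d r) i n = scons (proj1_sig d i) (proj_env r i) n.
Proof. destruct n; reflexivity. Qed.

(* The half of Łoś's theorem that needs no choice of witnesses. *)
Lemma sat_ultraproduct A : forall pol r, universal pol A ->
  U (fun i => holds (M i) pol (proj_env r i) A) -> holds ultraproduct pol r A.
Proof.
  induction A; intros pol r HU H; simpl in HU.
  - assert (E := proj_list_eval r
                   (proj2 (Forall_forall _ l) (fun t _ => eval_ultraproduct r t))).
    destruct pol; simpl in *.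
    + apply (U_mono _ (U_and H E)). intros i [Hp Ei]. rewrite Ei. exact Hp.
    + intros Hp. apply (U_contra (U_and (U_and H E) Hp)).
      intros i [[Hn Ei] Hp']. rewrite Ei in Hp'. contradiction.
  - assert (E := U_and (eval_ultraproduct r t) (eval_ultraproduct r t0)).
    destruct pol; simpl in *.
    + apply ultra_dom_eq. apply (U_mono _ (U_and H E)). intros i [He [E1 E2]]. congruence.
    + intros He. apply (U_contra (U_and H E)). intros i [Hn [E1 E2]].
      rewrite He in E1. congruence.
  - apply holds_neg, IHA; auto. apply (U_mono _ H). intros i. apply holds_neg.
  - destruct HU as [HU1 HU2]. destruct pol; simpl in *.
    + split; [apply (IHA1 true)|apply (IHA2 true)]; auto; apply (U_mono _ H); tauto.
    + assert (H' : U (fun i => holds (M i) false (proj_env r i) A1 \/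
                               holds (M i) false (proj_env r i) A2))
        by (apply (U_mono _ H); intros i; apply not_and_or).
      apply U_or in H' as [H'|H']; [apply (IHA1 false) in H'|apply (IHA2 false) in H'];
        auto; simpl in H'; tauto.
  - destruct HU as [HU1 HU2]. destruct pol; simpl in *.
    + apply U_or in H as [H|H]; [left; apply (IHA1 true)|right; apply (IHA2 true)]; auto.
    + intros [Hs|Hs]; [revert Hs; apply (IHA1 false)|revert Hs; apply (IHA2 false)]; auto;
        apply (U_mono _ H); tauto.
  - destruct HU as [-> HU]. simpl in *. intros d. apply (IHA true); auto.
    apply (U_mono _ H). intros i Hi. simpl.
    rewrite (sat_ext (M i) A _ _ (proj_env_scons d r i)). apply Hi.
  - destruct HU as [-> HU]. simpl in *. intros [d Hd]. revert Hd. apply (IHA false); auto.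
    apply (U_mono _ H). intros i Hi Hs. apply Hi.
    rewrite (sat_ext (M i) A _ _ (proj_env_scons d r i)) in Hs. eauto.
Qed.

End Ultraproduct.

Section Compactness.
Variable Sg : sig.

Definition finite_subsets_filter (Sigma : theory Sg) : (list (form Sg) -> Prop) -> Prop :=
  fun X => exists L, (forall A, In A L -> Sigma A) /\
    forall F, (forall A, In A F -> Sigma A) -> incl L F -> X F.

Lemma finite_subsets_filter_proper Sigma :
  filter.ProperFilter (finite_subsets_filter Sigma).
Proof.
  apply filter.Build_ProperFilter_ex; [|constructor].
  - intros X [L [HL H]]. exists L. apply H; auto. apply incl_refl.
  - exists []. split; [intros _ []|]. intros. exact I.
  - intros X Y [L1 [HL1 H1]] [L2 [HL2 H2]]. exists (L1 ++ L2). split.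
    + intros A HA. apply in_app_or in HA as [HA|HA]; auto.
    + intros F HF Hincl. split; [apply H1|apply H2]; auto;
        intros A HA; apply Hincl, in_or_app; auto.
  - intros X Y HXY [L [HL H]]. exists L. split; auto.
Qed.

Theorem compactness (Sigma : theory Sg) :
  (forall A, Sigma A -> universal true A) ->
  (forall F : list (form Sg), (forall A, In A F -> Sigma A) ->
     exists M : structure Sg, forall A, In A F -> forall r, sat M r A) ->
  exists M : structure Sg, model M Sigma.
Proof.
  intros HU HF.
  destruct (choice (fun F (M : structure Sg) => (forall A, In A F -> Sigma A) ->
                      forall A, In A F -> forall r, sat M r A)) as [Ms HMs].
  { intros F. destruct (classic (forall A, In A F -> Sigma A)) as [H|H].
    - destruct (HF F H) as [M HM]. eauto.
    - destruct (HF [] (fun _ H => match H with end)) as [M _]. exists M. tauto. }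
  destruct (filter.ultraFilterLemma (finite_subsets_filter_proper Sigma)) as [U [HU' Hsub]].
  exists (ultraproduct Ms HU'). intros A HA r.
  apply (sat_ultraproduct HU' A true r (HU A HA)).
  apply Hsub. exists [A]. split; [intros B [<-|[]]; exact HA|].
  intros F HFS Hincl. apply HMs; auto. apply Hincl. left. reflexivity.
Qed.

Corollary inconsistent_finite_subset (Sigma : theory Sg) :
  (forall A, Sigma A -> universal true A) -> inconsistent Sigma ->
  exists F : list (form Sg), (forall A, In A F -> Sigma A) /\
    forall M : structure Sg, ~ (forall A, In A F -> forall r, sat M r A).
Proof.
  intros HU Hinc. apply NNPP. intros N.
  destruct (compactness Sigma HU) as [M HM]; [|exact (Hinc M HM)].
  intros F HF. apply NNPP. intros N'. apply N. exists F. split; auto.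
  intros M HM. apply N'. eauto.
Qed.

End Compactness.

(** * Deductions and Skolem induction *)

Section Deductions.
Variable Sg : sig.
Implicit Types (rs : rule_system Sg) (D : clause_set Sg) (Bs : list (list (clause Sg))).

Definition cs_incl D D' : Prop := forall c, D c -> D' c.

Definition monotone_rules rs : Prop :=
  forall D D' B, rs D B -> cs_incl D D' -> rs D' B.

Lemma last_set_app D Bs Bs' : last_set D (Bs ++ Bs') = last_set (last_set D Bs) Bs'.
Proof. revert D; induction Bs; simpl; auto. Qed.

Lemma valid_deduction_app rs D Bs Bs' :
  valid_deduction rs D Bs -> valid_deduction rs (last_set D Bs) Bs' ->
  valid_deduction rs D (Bs ++ Bs').
Proof. revert D; induction Bs; simpl; intros D H1 H2; auto. destruct H1. split; auto. Qed.

Lemma last_set_incl D Bs : cs_incl D (last_set D Bs).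
Proof. revert D; induction Bs; simpl; intros D c H; auto. apply IHBs. left; auto. Qed.

Lemma last_set_mono D D' Bs : cs_incl D D' -> cs_incl (last_set D Bs) (last_set D' Bs).
Proof.
  revert D D'; induction Bs; simpl; intros D D' H; auto. apply IHBs.
  intros c [Hc|Hc]; [left; auto|right; auto].
Qed.

Lemma valid_deduction_mono rs D D' Bs : monotone_rules rs -> cs_incl D D' ->
  valid_deduction rs D Bs -> valid_deduction rs D' Bs.
Proof.
  revert D D'; induction Bs; simpl; intros D D' Hrs H V; auto. destruct V as [HB V]. split.
  - eapply Hrs; eauto.
  - apply (IHBs (cs_union D a)); auto. intros c [Hc|Hc]; [left; auto|right; auto].
Qed.

Lemma valid_deduction_sub (rs rs' : rule_system Sg) D Bs :
  (forall D B, rs D B -> rs' D B) -> valid_deduction rs D Bs -> valid_deduction rs' D Bs.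
Proof. revert D; induction Bs; simpl; intros D H V; auto. destruct V. split; auto. Qed.

(* Monotonicity keeps each deduction valid after the previous ones. *)
Lemma deductions_combine rs D {X : Type} (R : X -> clause_set Sg -> Prop) (L : list X) :
  monotone_rules rs -> (forall x D D', R x D -> cs_incl D D' -> R x D') ->
  (forall x, In x L -> exists Bs, valid_deduction rs D Bs /\ R x (last_set D Bs)) ->
  exists Bs, valid_deduction rs D Bs /\ forall x, In x L -> R x (last_set D Bs).
Proof.
  intros Hrs HR. induction L as [|x L IH]; intros H.
  - exists []. split; simpl; [auto|intros _ []].
  - destruct (H x (or_introl eq_refl)) as [Bs1 [V1 R1]].
    destruct IH as [Bs2 [V2 R2]]; [intros; apply H; right; auto|].
    exists (Bs1 ++ Bs2). split.
    + apply valid_deduction_app; auto. eapply valid_deduction_mono; eauto.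
      apply last_set_incl.
    + rewrite last_set_app. intros y [<-|Hy].
      * eapply HR; eauto. apply last_set_incl.
      * eapply HR; [apply R2, Hy|]. apply last_set_mono, last_set_incl.
Qed.

Lemma IND_R_monotone : monotone_rules (@IND_R Sg).
Proof.
  intros D D' B [phi [Hphi ->]] H. exists phi. split; auto.
  intros s Hs. destruct (Hphi s Hs) as [c [Hc Hsc]]. exists c. auto.
Qed.

Lemma sound_rule {rs D B c} : sound rs -> rs D B -> In c B ->
  (forall s, In s (syms_clause c) -> lang_cs D s) /\ entails D c.
Proof. intros Hrs HB Hc. apply Hrs. exists [B]. simpl. split; [tauto|right; exact Hc]. Qed.

End Deductions.

Section SkolemInduction.
Variable Sg : sig.
Implicit Types (T : theory Sg) (D : clause_set Sg).

Lemma skE_ind_universal_sentence (phi : form Sg) :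
  universal true (skE (ind phi)) /\ sentence (skE (ind phi)).
Proof. split; [apply sk_universal|apply skE_sentence, ind_sentence]. Qed.

Lemma SIw_universal_sentence T : (forall A, T A -> sentence A) ->
  forall A, SIw (skE_th T) A -> universal true A /\ sentence A.
Proof.
  intros HT A [k HA]. revert A HA. induction k; simpl; intros A HA.
  - destruct HA as [B [HB ->]]. split; [apply sk_universal|apply skE_sentence, HT, HB].
  - destruct HA as [HA|[phi [_ ->]]]; auto. apply skE_ind_universal_sentence.
Qed.

Lemma lang_SIn_succ T0 k s : lang_th (SIn k T0) s -> lang_th (SIn (S k) T0) s.
Proof. intros [A [HA Hs]]. exists A. split; [left|]; auto. Qed.

Lemma lang_cnf_th T0 s : lang_cs (cnf_th T0) s <-> lang_th T0 s.
Proof.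
  split.
  - intros [c [[A [HA Hc]] Hs]]. exists A. split; auto. apply cnf_syms. exists c. auto.
  - intros [A [HA Hs]]. apply cnf_syms in Hs as [c [Hc Hs]]. exists c. split; auto.
    exists A. auto.
Qed.

Definition lang_bounded T0 D : Prop :=
  exists k, forall s, lang_cs D s -> lang_th (SIn k T0) s.

Lemma rule_step_invariant (rs : rule_system Sg) (T0 : theory Sg) (M : structure Sg) D B :
  sound rs -> model M (SIw T0) -> sys_union rs IND_R D B ->
  cs_model M D -> lang_bounded T0 D ->
  cs_model M (cs_union D B) /\ lang_bounded T0 (cs_union D B).
Proof.
  intros Hrs HM HB HMD [k Hk]. destruct HB as [HB|[phi [Hphi ->]]].
  - split.
    + intros c [Hc|Hc]; auto. apply (proj2 (sound_rule Hrs HB Hc)), HMD.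
    + exists k. intros s [c [[Hc|Hc] Hs]]; apply Hk; [exists c; auto|].
      apply (proj1 (sound_rule Hrs HB Hc)), Hs.
  - assert (Hax : SIn (S k) T0 (skE (ind phi)))
      by (right; exists phi; split; auto; intros s Hs; apply Hk, Hphi, Hs).
    destruct (skE_ind_universal_sentence phi) as [HU HS].
    split.
    + intros c [Hc|Hc]; auto.
      apply (proj1 (cnf_model M HU HS)); auto. apply HM. exists (S k). exact Hax.
    + exists (S k). intros s [c [[Hc|Hc] Hs]].
      * apply lang_SIn_succ, Hk. exists c. auto.
      * exists (skE (ind phi)). split; auto. apply cnf_syms. exists c. auto.
Qed.

Lemma refutation_inconsistent (rs : rule_system Sg) (T0 : theory Sg) :
  sound rs -> (forall A, SIw T0 A -> universal true A /\ sentence A) ->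
  refutes (sys_union rs IND_R) (cnf_th T0) -> inconsistent (SIw T0).
Proof.
  intros Hrs HT0 [Bs [V HL]] M HM.
  assert (Inv : forall D, valid_deduction (sys_union rs IND_R) D Bs ->
                  cs_model M D -> lang_bounded T0 D -> cs_model M (last_set D Bs)).
  { clear V HL. induction Bs as [|B Bs IH]; simpl; intros D V HMD HLD; auto.
    destruct V as [HB V]. destruct (rule_step_invariant Hrs HM HB HMD HLD). auto. }
  assert (HM0 : cs_model M (cnf_th T0)).
  { apply cnf_th_model; [intros A HA; apply HT0; exists 0; exact HA|].
    intros A HA. apply HM. exists 0. exact HA. }
  assert (HL0 : lang_bounded T0 (cnf_th T0)) by (exists 0; apply lang_cnf_th).
  destruct (Inv _ V HM0 HL0 [] HL (fun _ => dom_inh M)) as [l [[] _]].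
Qed.

Lemma SIn_cnf_derivable (T0 : theory Sg) k A : SIn k T0 A ->
  exists Bs, valid_deduction IND_R (cnf_th T0) Bs /\
             forall c, In c (cnf A) -> last_set (cnf_th T0) Bs c.
Proof.
  revert A. induction k; simpl; intros A HA.
  - exists []. split; simpl; auto. intros c Hc. exists A. auto.
  - destruct HA as [HA|[phi [Hphi ->]]]; auto.
    destruct (deductions_combine (cnf_th T0) (fun s D => lang_cs D s) (syms_f phi)
                                 (@IND_R_monotone Sg))
      as [Bs [V HBs]].
    { intros s D D' [c [Hc Hs]] H. exists c. auto. }
    { intros s Hs. destruct (Hphi s Hs) as [A' [HA' HsA']].
      destruct (IHk A' HA') as [Bs [V HB]]. exists Bs. split; auto.
      apply cnf_syms in HsA' as [c [Hc Hsc]]. exists c. auto. }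
    exists (Bs ++ [cnf (skE (ind phi))]). split.
    + apply valid_deduction_app; auto. simpl. split; auto. exists phi. auto.
    + rewrite last_set_app. intros c Hc. right. exact Hc.
Qed.

Lemma inconsistent_refutation (rs : rule_system Sg) (T0 : theory Sg) :
  refutationally_complete rs -> (forall A, SIw T0 A -> universal true A /\ sentence A) ->
  inconsistent (SIw T0) -> refutes (sys_union rs IND_R) (cnf_th T0).
Proof.
  intros Hrs HT0 Hinc.
  destruct (inconsistent_finite_subset (fun A HA => proj1 (HT0 A HA)) Hinc) as [F [HF Hunsat]].
  destruct (deductions_combine (cnf_th T0) (fun A D => forall c, In c (cnf A) -> D c) F
                               (@IND_R_monotone Sg))
    as [Bs [V HBs]].
  { intros A D D' HD H c Hc. apply H, HD, Hc. }
  { intros A HA. destruct (HF A HA) as [k Hk]. exact (SIn_cnf_derivable _ _ _ Hk). }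
  assert (Hunsat' : cs_unsat (last_set (cnf_th T0) Bs)).
  { intros M HM. apply (Hunsat M). intros A HA.
    apply (cnf_model M (proj1 (HT0 A (HF A HA))) (proj2 (HT0 A (HF A HA)))).
    intros c Hc. apply HM, (HBs A HA c Hc). }
  destruct (Hrs _ Hunsat') as [Bs' [V' HL']].
  exists (Bs ++ Bs'). split.
  - apply valid_deduction_app.
    + apply (valid_deduction_sub IND_R); auto. intros D B H. right. exact H.
    + apply (valid_deduction_sub rs); auto. intros D B H. left. exact H.
  - rewrite last_set_app. exact HL'.
Qed.

End SkolemInduction.

Theorem proposition5 (S : sig) (rs : rule_system S) (T : theory S) :
  sound rs ->
  refutationally_complete rs ->
  (forall A, T A -> sentence A) ->
  (refutes (sys_union rs IND_R) (cnf_th (skE_th T)) <->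
   inconsistent (SIw (skE_th T))).
Proof.
  intros Hsound Hcomplete HT.
  assert (HSI := SIw_universal_sentence HT).
  split.
  - exact (refutation_inconsistent Hsound HSI).
  - exact (inconsistent_refutation Hcomplete HSI).
Qed.
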